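(* Let $P$ be an $n\times n$ D-orthogonal matrix. Then there exist vectors $\mathbf u_1,\dots,\mathbf u_n\in\{0,1\}^n$ such that each matrix $I+\mathbf u_i\mathbf u_i^T$ is D-orthogonal, and a matrix obtained from $P$ by permuting its rows and columns is congruent modulo $2$ to the product $(I+\mathbf u_1\mathbf u_1^T)(I+\mathbf u_2\mathbf u_2^T)\cdots(I+\mathbf u_n\mathbf u_n^T)$.
   Context: For integer matrices, $A\cong B$ means $A\equiv B\pmod 2$ entrywise. An integer (dyadic) square matrix $P$ is D-orthogonal if $P^TP\cong I$. Two matrices are indistinguishable if one is obtained from the other by permuting rows and columns. *)

From mathcomp Require Import all_boot all_order all_algebra all_fingroup.
Set Implicit Arguments. Unset Strict Implicit. Unset Printing Implicit Defensive.
Import GRing.Theory Num.Theory.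
Local Open Scope ring_scope.

Definition mxcongr2 {m n : nat} (A B : 'M[int]_(m, n)) : Prop :=
  forall i j, (A i j = B i j %[mod 2])%Z.

Definition D_orthogonal {n : nat} (P : 'M[int]_n) : Prop :=
  mxcongr2 (P^T *m P) 1%:M.

Definition elem_mx {n : nat} (u : 'cV[int]_n) : 'M[int]_n := 1%:M + u *m u^T.

Definition mxprod {n : nat} (s : seq 'M[int]_n) : 'M[int]_n :=
  foldr (fun A B => A *m B) 1%:M s.

From mathcomp Require Import all_boot all_order all_algebra all_fingroup.
Import GRing.Theory.
Local Open Scope ring_scope.
Set Implicit Arguments. Unset Strict Implicit.

(* Over F_2, D-orthogonality of P says that its reduction M satisfies
   M^T M = 1, and I + u u^T is an orthogonal involution whenever u^T u = 0.
   Columns are normalised one at a time.  If the first k columns of N are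
   distinct unit vectors e_(f j), the next column x has x^T x = 1 and vanishes
   on the rows f j; for a row a outside that image with x_a = 0, the vector
   u = x + e_a is isotropic and I + u u^T sends x to e_a while fixing the
   earlier columns.  Such a row exists unless x is already a unit vector:
   otherwise x is the indicator of the rows outside the image, which is
   orthogonal to no further column, so x is the last column, and then the
   orthogonality of the rows makes it a unit vector.  After n steps
   M = (I + u_1 u_1^T) ... (I + u_n u_n^T) N with N a permutation matrix. *)

Definition reflmx {R : pzRingType} {n : nat} (u : 'cV[R]_n) : 'M[R]_n :=
  1%:M + u *m u^T.

Definition mulmx_seq {R : pzRingType} {n : nat} (s : seq 'M[R]_n) : 'M[R]_n :=
  foldr mulmx 1%:M s.

Lemma sum_delta_mull (R : pzSemiRingType) (I : finType) (a : I) (G : I -> R) :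
  \sum_i (i == a)%:R * G i = G a.
Proof.
by rewrite (bigD1 a) //= eqxx mul1r big1 ?addr0 // => i /negPf ->; rewrite mul0r.
Qed.

Lemma map_nth_enum_ord (T U : Type) (x0 : T) (F : T -> U) n (s : seq T) :
  size s = n -> [seq F (nth x0 s i) | i : 'I_n <- enum 'I_n] = map F s.
Proof.
by move=> <-; rewrite -[in RHS](mkseq_nth x0 s) /mkseq -val_enum_ord -!map_comp.
Qed.

Lemma mulmx_seq_rcons (R : pzRingType) n (s : seq 'M[R]_n) A :
  mulmx_seq (rcons s A) = mulmx_seq s *m A.
Proof. by elim: s => [|B s IH] /=; rewrite ?mul1mx ?mulmx1 // IH mulmxA. Qed.

Lemma map_mulmx_seq (R S : pzRingType) (f : {rmorphism R -> S}) n
    (s : seq 'M[R]_n) :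
  map_mx f (mulmx_seq s) = mulmx_seq (map (map_mx f) s).
Proof. by elim: s => [|A s IH] /=; rewrite ?map_mx1 // map_mxM IH. Qed.

Lemma map_reflmx (R S : pzRingType) (f : {rmorphism R -> S}) n (u : 'cV[R]_n) :
  map_mx f (reflmx u) = reflmx (map_mx f u).
Proof. by rewrite map_mxD map_mx1 map_mxM -map_trmx. Qed.

Lemma reflmx0 (R : pzRingType) n : reflmx (0 : 'cV[R]_n) = 1%:M.
Proof. by rewrite /reflmx mul0mx addr0. Qed.

Lemma trmx_reflmx (R : comPzRingType) n (u : 'cV[R]_n) : (reflmx u)^T = reflmx u.
Proof. by rewrite /reflmx linearD /= trmx1 trmx_mul trmxK. Qed.

Lemma reflmx_mulmxE (R : pzRingType) n p (u : 'cV[R]_n) (N : 'M[R]_(n, p)) i j :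
  (reflmx u *m N) i j = N i j + u i 0 * \sum_l u l 0 * N l j.
Proof.
rewrite mulmxDl mul1mx -mulmxA !mxE big_ord1 !mxE.
by congr (_ + _ * _); apply: eq_bigr => l _; rewrite !mxE.
Qed.

Lemma trmx_mulmxE (R : pzRingType) m n (N : 'M[R]_(m, n)) j c :
  (N^T *m N) j c = \sum_i N i j * N i c.
Proof. by rewrite mxE; apply: eq_bigr => i _; rewrite mxE. Qed.

Section CharTwo.
Variable R : comNzRingType.
Hypothesis pcharR2 : 2 \in [pchar R].

Lemma addmxx_pchar2 m p (A : 'M[R]_(m, p)) : A + A = 0.
Proof. by apply/matrixP => i j; rewrite !mxE addrr_pchar2. Qed.

Lemma reflmxK n (u : 'cV[R]_n) : u^T *m u = 0 -> reflmx u *m reflmx u = 1%:M.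
Proof.
move=> u_iso; rewrite /reflmx mulmxDl mul1mx mulmxDr mulmx1.
rewrite -[u *m u^T *m _]mulmxA [u^T *m _]mulmxA u_iso mul0mx mulmx0 addr0.
by rewrite -addrA addmxx_pchar2 addr0.
Qed.

Lemma reflmx_orthogonal n (u : 'cV[R]_n) :
  u^T *m u = 0 -> (reflmx u)^T *m reflmx u = 1%:M.
Proof. by move=> u_iso; rewrite trmx_reflmx reflmxK. Qed.

End CharTwo.

Local Notation F2 := 'F_2.

Lemma pchar_F2 : 2 \in [pchar F2]. Proof. exact: pchar_Fp. Qed.

Lemma F2_eq1 (a : F2) : a != 0 -> a = 1.
Proof. by case: a => [[|[|m]] lt_m2] // _; apply/val_inj. Qed.

Lemma F2_mulxx (a : F2) : a * a = a.
Proof. by have [->|/F2_eq1->] := eqVneq a 0; rewrite ?mul0r ?mul1r. Qed.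

Section OrthogonalF2.
Variable n : nat.
Implicit Types (M N : 'M[F2]_n) (u : 'cV[F2]_n) (f : 'I_n -> 'I_n).

Definition std_cols (k : nat) f N :=
  forall i (j : 'I_n), (j < k)%N -> N i j = (i == f j)%:R.

Definition pivot_vec N (kk a : 'I_n) : 'cV[F2]_n := \col_i (N i kk + (i == a)%:R).

Lemma std_cols_extend N (kk a : 'I_n) f :
  std_cols kk f N -> (forall i, N i kk = (i == a)%:R) ->
  std_cols kk.+1 (fun j => if j == kk then a else f j) N.
Proof.
move=> Nf Nkk i j; rewrite ltnS leq_eqVlt => /orP[/eqP/val_inj->|lt_jk].
  by rewrite eqxx.
by rewrite Nf // ifF //; apply/negbTE; rewrite -val_eqE ltn_eqF.
Qed.

Section Orthogonal.
Variable N : 'M[F2]_n.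
Hypothesis N_orth : N^T *m N = 1%:M.

Lemma col_dot (j c : 'I_n) : \sum_i N i j * N i c = (j == c)%:R.
Proof. by rewrite -trmx_mulmxE N_orth mxE. Qed.

Lemma std_cols_row k f (j c : 'I_n) :
  std_cols k f N -> (j < k)%N -> N (f j) c = (j == c)%:R.
Proof.
move=> Nf lt_jk; rewrite -col_dot.
by under eq_bigr => i _ do rewrite (Nf i j lt_jk); rewrite sum_delta_mull.
Qed.

Lemma std_cols_inj f : std_cols n f N -> injective f.
Proof.
move=> Nf j j' eq_f; apply/eqP.
have := std_cols_row j' Nf (ltn_ord j); rewrite eq_f (std_cols_row j' Nf) //.
by rewrite eqxx; case: eqP => // _ /eqP; rewrite eq_sym oner_eq0.
Qed.

Lemma pivot_vec_dot (kk a j : 'I_n) :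
  \sum_l pivot_vec N kk a l 0 * N l j = (kk == j)%:R + N a j.
Proof.
under eq_bigr => l _ do rewrite mxE mulrDl.
by rewrite big_split /= col_dot sum_delta_mull.
Qed.

Lemma pivot_vec_isotropic (kk a : 'I_n) :
  (pivot_vec N kk a)^T *m pivot_vec N kk a = 0.
Proof.
apply/matrixP => i j; rewrite !ord1 trmx_mulmxE mxE.
under eq_bigr => l _ do rewrite [X in _ * X]mxE mulrDr [_ * (_ == _)%:R]mulrC.
rewrite big_split /= pivot_vec_dot sum_delta_mull mxE !eqxx (addrC (N a kk)).
exact: (addrr_pchar2 pchar_F2).
Qed.

Lemma reflmx_pivot_col (kk a : 'I_n) i : N a kk = 0 ->
  (reflmx (pivot_vec N kk a) *m N) i kk = (i == a)%:R.
Proof.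
move=> Na0; rewrite reflmx_mulmxE pivot_vec_dot Na0 eqxx addr0 mulr1 mxE addrA.
by rewrite (addrr_pchar2 pchar_F2) add0r.
Qed.

Lemma reflmx_pivot_fix (kk a j : 'I_n) i : j != kk -> N a j = 0 ->
  (reflmx (pivot_vec N kk a) *m N) i j = N i j.
Proof.
move=> ne_jk Naj.
by rewrite reflmx_mulmxE pivot_vec_dot Naj eq_sym (negPf ne_jk) addr0 mulr0 addr0.
Qed.

Lemma pivot_exists (kk : 'I_n) f : std_cols kk f N ->
  (exists2 a, N a kk = 0 & forall j : 'I_n, (j < kk)%N -> a != f j)
  \/ exists a, forall i, N i kk = (i == a)%:R.
Proof.
move=> Nf.
have [/existsP[a /andP[/eqP Na0 /forallP a_new]]|/existsPn no_pivot] :=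
  boolP [exists a, (N a kk == 0) && [forall j : 'I_n, (j < kk)%N ==> (a != f j)]].
  by left; exists a => // j; apply/implyP: (a_new j).
have col_kk_mul (c : 'I_n) i : (kk <= c)%N -> N i kk * N i c = N i c.
  move=> le_kc; have /nandP[/F2_eq1->|] := no_pivot i; first by rewrite mul1r.
  rewrite negb_forall => /existsP[j].
  rewrite negb_imply negbK => /andP[lt_jk /eqP->].
  have ne_jc : (j == c) = false.
    by rewrite -val_eqE ltn_eqF // (leq_trans lt_jk le_kc).
  by rewrite (std_cols_row c Nf lt_jk) ne_jc mulr0.
have [lt_kn|le_nk] := ltnP kk.+1 n.
  have [c c_val] : {c : 'I_n | val c = kk.+1} by exists (Ordinal lt_kn).
  have le_kc : (kk <= c)%N by rewrite c_val.
  have := col_dot c c; under eq_bigr => i _ do rewrite F2_mulxx.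
  rewrite -(eq_bigr _ (fun i _ => col_kk_mul c i le_kc)) col_dot eqxx.
  by rewrite -val_eqE c_val ltn_eqF // => /eqP; rewrite eq_sym oner_eq0.
right.
have lt_c_kk (c : 'I_n) : c != kk -> (c < kk)%N.
  by move=> ne_ck; rewrite ltn_neqAle -ltnS (leq_trans (ltn_ord c) le_nk) andbT.
have [a /F2_eq1 Na1|N0] := pickP (fun a => N a kk != 0); last first.
  have := col_dot kk kk; rewrite big1 ?eqxx => [/eqP|i _].
    by rewrite eq_sym oner_eq0.
  by move/negbFE/eqP: (N0 i) => ->; rewrite mul0r.
exists a => b; have [->|ne_ba] := eqVneq b a; first by rewrite Na1.
have Na_off (c : 'I_n) : c != kk -> N a c = 0.
  move=> ne_ck; rewrite (Nf a c (lt_c_kk c ne_ck)); case: eqP => // a_fc.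
  move: Na1; rewrite a_fc (std_cols_row kk Nf (lt_c_kk c ne_ck)) (negPf ne_ck).
  by move/eqP; rewrite eq_sym oner_eq0.
move/matrixP: (mulmx1C N_orth) => /(_ a b); rewrite !mxE eq_sym (negPf ne_ba).
rewrite (bigD1 kk) //= big1 => [|c ne_ck]; last by rewrite Na_off ?mul0r.
by rewrite !mxE Na1 mul1r addr0 => ->.
Qed.

End Orthogonal.

Lemma orthogonal_reflmx_mul u N : u^T *m u = 0 -> N^T *m N = 1%:M ->
  (reflmx u *m N)^T *m (reflmx u *m N) = 1%:M.
Proof.
move=> u_iso N_orth; rewrite trmx_mul mulmxA -[N^T *m _ *m _]mulmxA.
by rewrite (reflmx_orthogonal pchar_F2 u_iso) mulmx1.
Qed.

Lemma std_cols_step N (kk : 'I_n) f : N^T *m N = 1%:M -> std_cols kk f N ->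
  exists2 u, u^T *m u = 0 & exists f', std_cols kk.+1 f' (reflmx u *m N).
Proof.
move=> N_orth Nf; have [[a Na0 a_new]|[a Nkk]] := pivot_exists N_orth Nf.
  exists (pivot_vec N kk a); first exact: pivot_vec_isotropic.
  exists (fun j => if j == kk then a else f j); apply: std_cols_extend => i.
    move=> j lt_jk; rewrite reflmx_pivot_fix ?Nf ?(negPf (a_new j lt_jk)) //.
    by rewrite -val_eqE ltn_eqF.
  exact: reflmx_pivot_col.
exists 0; first by rewrite mulmx0.
exists (fun j => if j == kk then a else f j).
by rewrite reflmx0 mul1mx; apply: std_cols_extend.
Qed.

Lemma reflmx_factorization_prefix M k : M^T *m M = 1%:M -> (k <= n)%N ->
  exists us : seq 'cV[F2]_n, exists N, exists f,
    [/\ size us = k, {in us, forall u, u^T *m u = 0},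
        M = mulmx_seq (map reflmx us) *m N, N^T *m N = 1%:M & std_cols k f N].
Proof.
move=> M_orth; elim: k => [|k IH] lt_kn.
  by exists [::], M, id; split; rewrite //= mul1mx.
have [us [N [f [size_us us_iso def_M N_orth Nf]]]] := IH (ltnW lt_kn).
have [u u_iso [f' Nf']] := std_cols_step (kk := Ordinal lt_kn) N_orth Nf.
exists (rcons us u), (reflmx u *m N), f'; split=> //.
- by rewrite size_rcons size_us.
- by move=> v; rewrite mem_rcons inE => /predU1P[->|/us_iso].
- rewrite def_M map_rcons mulmx_seq_rcons -mulmxA (mulmxA (reflmx u)).
  by rewrite (reflmxK pchar_F2 u_iso) mul1mx.
- exact: orthogonal_reflmx_mul.
Qed.

Lemma orthogonal_reflmx_factorization M : M^T *m M = 1%:M ->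
  exists us : seq 'cV[F2]_n, exists s : 'S_n,
    [/\ size us = n, {in us, forall u, u^T *m u = 0} &
        col_perm s M = mulmx_seq (map reflmx us)].
Proof.
move=> M_orth.
have [us [N [f [size_us us_iso -> N_orth Nf]]]] :=
  reflmx_factorization_prefix M_orth (leqnn n).
pose s := perm (std_cols_inj N_orth Nf).
have -> : N = perm_mx s^-1%g.
  apply/matrixP => i j; rewrite Nf // !mxE (canF_eq (permKV s)) permE.
  by rewrite eq_sym.
by exists us, s^-1%g; rewrite -col_permE -col_permM mulVg col_perm1.
Qed.

End OrthogonalF2.

Lemma eqz_mod2_F2 (a b : int) : (a = b %[mod 2])%Z <-> (a%:~R = b%:~R :> F2).
Proof.
apply: iff_trans (rwP eqP) (iff_trans _ (iff_sym (rwP eqP))).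
by rewrite eqz_mod_dvd (dvdz_pcharf pchar_F2) rmorphB /= subr_eq0.
Qed.

Lemma mxcongr2_F2 m p (A B : 'M[int]_(m, p)) :
  mxcongr2 A B <-> map_mx intr A = map_mx intr B :> 'M[F2]_(m, p).
Proof.
split=> [AB|/matrixP AB i j].
  by apply/matrixP => i j; rewrite !mxE; apply/eqz_mod2_F2.
by apply/eqz_mod2_F2; have := AB i j; rewrite !mxE.
Qed.

Lemma D_orthogonal_F2 n (P : 'M[int]_n) :
  D_orthogonal P <-> (map_mx intr P)^T *m map_mx intr P = 1%:M :> 'M[F2]_n.
Proof.
by apply: iff_trans (mxcongr2_F2 _ _) _; rewrite map_mxM map_mx1 map_trmx.
Qed.

Definition lift_F2 m p (A : 'M[F2]_(m, p)) : 'M[int]_(m, p) :=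
  map_mx (fun a : F2 => (a : nat)%:Z) A.

Lemma lift_F2K m p (A : 'M[F2]_(m, p)) : map_mx intr (lift_F2 A) = A.
Proof. by apply/matrixP => i j; rewrite !mxE -pmulrn natr_Zp. Qed.

Lemma lift_F2_01 m p (A : 'M[F2]_(m, p)) i j :
  lift_F2 A i j = 0 \/ lift_F2 A i j = 1.
Proof. by rewrite mxE; have [->|/F2_eq1->] := eqVneq (A i j) 0; [left|right]. Qed.

Theorem theorem3p9 (n : nat) (P : 'M[int]_n) :
  D_orthogonal P ->
  exists u : 'I_n -> 'cV[int]_n,
    (forall i k, u i k ord0 = 0 \/ u i k ord0 = 1) /\
    (forall i, D_orthogonal (elem_mx (u i))) /\
    exists (r c : 'S_n),
      mxcongr2 (row_perm r (col_perm c P))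
             (mxprod [seq elem_mx (u i) | i <- enum 'I_n]).
Proof.
move=> /D_orthogonal_F2 P_orth.
have [us [s [size_us us_iso factor_P]]] := orthogonal_reflmx_factorization P_orth.
have map_elem_mx (i : 'I_n) :
    map_mx intr (elem_mx (lift_F2 (nth 0 us i))) = reflmx (nth 0 us i) :> 'M[F2]_n.
  by rewrite -[elem_mx _]/(reflmx _) map_reflmx lift_F2K.
exists (fun i => lift_F2 (nth 0 us i)); split=> [i k|]; first exact: lift_F2_01.
split=> [i|].
  apply/D_orthogonal_F2; rewrite map_elem_mx (reflmx_orthogonal pchar_F2) //.
  by apply: us_iso; rewrite mem_nth ?size_us.
have reflmx_us : map reflmx us =
    map (map_mx intr) [seq elem_mx (lift_F2 (nth 0 us i)) | i : 'I_n <- enum 'I_n].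
  rewrite -map_comp -(map_nth_enum_ord 0 _ size_us).
  by apply: eq_map => i /=; rewrite map_elem_mx.
exists 1%g, s; apply/mxcongr2_F2.
by rewrite row_perm1 map_col_perm factor_P reflmx_us -map_mulmx_seq.
Qed.
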